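(* For every integer $n\ge4$, $\mathcal D(n)>\mathcal P(n)$, where $\mathcal D(n)=2^4\cdot3^{(n-4)/2}$ for $n$ even, $\mathcal D(n)=2^5\cdot3^{(n-5)/2}$ for $n$ odd, and $\mathcal P(n)$ is the number of unordered pairs $\{\xi,\eta\}$ of partitions with $|\xi|+|\eta|=n$, where each pair with $\xi=\eta$ is counted twice (i.e. $\mathcal P(n)$ is the number of irreducible complex representations of the Weyl group of type $D_n$). *)

From mathcomp Require Import all_boot.
Set Implicit Arguments. Unset Strict Implicit. Unset Printing Implicit Defensive.

Definition is_partition (s : seq nat) : bool :=
  sorted geq s && all (fun x => 0 < x) s.

Definition psize (s : seq nat) : nat := sumn s.

Fixpoint allseq (b l : nat) : seq (seq nat) :=
  match l with
  | 0 => [:: [::]]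
  | l'.+1 => [::] :: [seq x :: s | x <- iota 0 b.+1, s <- allseq b l']
  end.

(* The list of all partitions of size k (every partition of k has at most
   k parts, each at most k, so it occurs in allseq k k). *)
Definition partitions (k : nat) : seq (seq nat) :=
  [seq s <- allseq k k | is_partition s && (psize s == k)].

Definition ordered_pairs (n : nat) : seq (seq nat * seq nat) :=
  flatten [seq [seq (x, y) | x <- partitions k, y <- partitions (n - k)]
           | k <- iota 0 n.+1].

(* Unordered pairs {xi, eta}: each unordered pair is represented by the
   first of (xi,eta), (eta,xi) occurring in the (duplicate-free) list of
   ordered pairs. *)
Definition unordered_pairs (n : nat) : seq (seq nat * seq nat) :=
  let L := ordered_pairs n in
  [seq p <- L | index p L <= index (p.2, p.1) L].

Definition calP (n : nat) : nat :=
  \sum_(p <- unordered_pairs n) (if p.1 == p.2 then 2 else 1).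

Definition calD (n : nat) : nat :=
  if odd n then 2 ^ 5 * 3 ^ ((n - 5) %/ 2) else 2 ^ 4 * 3 ^ ((n - 4) %/ 2).

From mathcomp Require Import all_boot zify.
From Stdlib Require Import NArith.
Set Implicit Arguments. Unset Strict Implicit. Unset Printing Implicit Defensive.

(* The unordered pairs are the ordered pairs
      (xi, eta) that occur no later than (eta, xi) in the list of ordered
      pairs, so 2 P(n) = #(ordered pairs) + 3 #(diagonal pairs), and hence
      2 P(n) <= sum_k p(k) p(n - k) + 3 p(n/2), where p(k) counts partitions.
   2. Counting partitions.  A partition is determined by its number of
      parts 2, its number of parts 1 and its sequence of parts >= 3; this
      injects the partitions of k into an explicit list codes k, whose size
      a(k) satisfies linear recurrences giving 5 2^k a(k) <= 3^(k+3).
   3. Hence 25 2^n (2 P(n)) <= (n + 2) 3^(n+6).  Since D(n + 2) = 3 D(n),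
      the inequality (n + 2) 3^(n+6) < 50 2^n D(n) propagates from n to
      n + 2; it holds for n = 41, 42 and thus for all n >= 41.
   4. For 4 <= n <= 40 the bound 2 P(n) <= sum_k a(k) a(n-k) + 3 a(n/2)
      is compared with 2 D(n) by computation in binary arithmetic. *)

Lemma allseqS b l :
  allseq b l.+1 = [::] :: [seq x :: s | x <- iota 0 b.+1, s <- allseq b l].
Proof. by []. Qed.

Lemma allseq_uniq b l : uniq (allseq b l).
Proof.
elim: l => [|l IHl] //; rewrite allseqS cons_uniq; apply/andP; split.
  by apply/negP => /allpairsP [[x s] []].
apply: allpairs_uniq => //; first exact: iota_uniq.
by move=> [x s] [y t] _ _ /= [-> ->].
Qed.

Lemma mem_allseq b l s :
  size s <= l -> all (fun x => x <= b) s -> s \in allseq b l.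
Proof.
elim: l s => [|l IHl] [|x s] //; rewrite allseqS // => size_s /andP [x_le s_le].
rewrite in_cons; apply/orP; right; apply/allpairsP; exists (x, s).
by rewrite mem_iota IHl.
Qed.

Lemma size_le_sumn s : all (fun x => 0 < x) s -> size s <= sumn s.
Proof.
by elim: s => //= x s IHs /andP [x_gt0 /IHs]; rewrite -add1n; apply: leq_add.
Qed.

Lemma part_le_sumn s : all (fun x => x <= sumn s) s.
Proof.
apply/allP; elim: s => //= x s IHs y; rewrite in_cons => /orP [/eqP ->|/IHs].
  exact: leq_addr.
by move/leq_trans; apply; apply: leq_addl.
Qed.

Lemma partitions_uniq k : uniq (partitions k).
Proof. exact/filter_uniq/allseq_uniq. Qed.

Lemma mem_partitions k s :
  (s \in partitions k) = is_partition s && (psize s == k).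
Proof.
rewrite mem_filter andb_idr // => /andP [/andP [_ s_pos] /eqP <-].
exact: mem_allseq (size_le_sumn s_pos) (part_le_sumn s).
Qed.

Lemma mem_ordered_pairs n x y : ((x, y) \in ordered_pairs n) =
  [&& is_partition x, is_partition y & psize x + psize y == n].
Proof.
apply/flattenP/idP.
  move=> [_ /mapP [k k_in ->] /allpairsP [[a b] [/= a_in b_in [-> ->]]]].
  move: a_in b_in k_in; rewrite !mem_partitions mem_iota.
  by move=> /andP [-> /eqP ->] /andP [-> /eqP ->] /=; lia.
move=> /and3P [x_part y_part /eqP sum_xy].
exists [seq (a, b) | a <- partitions (psize x), b <- partitions (n - psize x)].
  by apply/mapP; exists (psize x); rewrite // mem_iota; lia.
apply/allpairsP; exists (x, y); rewrite /= !mem_partitions x_part y_part eqxx.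
by split => //; apply/eqP; lia.
Qed.

Lemma flatten_keyed_uniq (T I : eqType) (key : T -> I) (F : I -> seq T)
    (s : seq I) :
  uniq s -> (forall i, uniq (F i)) -> (forall i x, x \in F i -> key x = i) ->
  uniq (flatten (map F s)).
Proof.
move=> + F_uniq F_key; elim: s => //= i s IHs /andP [i_notin_s /IHs s_uniq].
rewrite cat_uniq F_uniq s_uniq andbT; apply/hasPn => x /flattenP.
move=> [_ /mapP [j j_in_s ->] /F_key x_key]; apply/negP => /F_key.
by move=> key_x; move: i_notin_s; rewrite -key_x x_key j_in_s.
Qed.

Lemma ordered_pairs_uniq n : uniq (ordered_pairs n).
Proof.
apply: (@flatten_keyed_uniq _ _ (fun p => psize p.1)); first exact: iota_uniq.
  move=> k; apply: allpairs_uniq; try exact: partitions_uniq.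
  by move=> [a b] [c d] _ _ /= [-> ->].
move=> k _ /allpairsP [[a b] [/= + _ ->]].
by rewrite mem_partitions => /andP [_ /eqP].
Qed.

Lemma size_ordered_pairs n : size (ordered_pairs n) =
  sumn [seq size (partitions k) * size (partitions (n - k)) | k <- iota 0 n.+1].
Proof.
rewrite size_flatten /shape -map_comp; congr sumn.
by apply: eq_map => k /=; rewrite size_allpairs.
Qed.

Lemma count_predI_split (T : Type) (a b : pred T) (s : seq T) :
  count a s = count (predI a b) s + count (predI a (predC b)) s.
Proof. by elim: s => //= x s ->; case: (a x); case: (b x) => /=; lia. Qed.

Section InvolutionOrbits.
Variables (T : eqType) (sw : T -> T) (L : seq T).
Hypotheses (swK : involutive sw) (L_uniq : uniq L).
Hypothesis mem_sw : forall x, (sw x \in L) = (x \in L).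

Definition first_in_orbit (x : T) : bool := index x L <= index (sw x) L.

Lemma perm_map_sw : perm_eq L (map sw L).
Proof.
apply: uniq_perm => //; first by rewrite (map_inj_uniq (can_inj swK)).
by move=> x; rewrite -[x in RHS]swK (mem_map (can_inj swK)) mem_sw.
Qed.

(* Off the fixed points, sw exchanges first and non-first elements. *)
Lemma count_moved_first :
  count (predI (predC (fun x => sw x == x)) first_in_orbit) L =
  count (predI (predC (fun x => sw x == x)) (predC first_in_orbit)) L.
Proof.
rewrite (permP perm_map_sw) count_map; apply: eq_in_count => x x_in_L /=.
rewrite /first_in_orbit swK [x == _]eq_sym.
have [_|sw_x_neq_x] := eqVneq x (sw x) => //=.
rewrite -ltnNge ltn_neqAle.
suff -> : index (sw x) L != index x L by [].
have sw_x_in_L : sw x \in L by rewrite mem_sw.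
apply: contra_neq sw_x_neq_x => /(congr1 (nth x L)).
by rewrite !nth_index.
Qed.

(* Every orbit has exactly one first element, so this counts the orbits
   with the fixed points counted twice. *)
Lemma double_count_first :
  (count first_in_orbit L).*2 = size L + count (fun x => sw x == x) L.
Proof.
set fixed := fun x => sw x == x.
have fixed_first : count (predI first_in_orbit fixed) L = count fixed L.
  apply: eq_count => x /=; rewrite /fixed /first_in_orbit.
  by have [->|] := eqVneq (sw x) x; rewrite ?leqnn ?andbF.
have := count_predI_split first_in_orbit fixed L.
have := count_predI_split (predC fixed) first_in_orbit L.
have := count_predC fixed L; have := count_moved_first.
have commute : count (predI (predC fixed) first_in_orbit) L =
               count (predI first_in_orbit (predC fixed)) L.
  by apply: eq_count => x; apply: andbC.
rewrite -/fixed fixed_first commute; lia.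
Qed.
End InvolutionOrbits.

Lemma sum_weights (T : Type) (f d : pred T) (s : seq T) :
  \sum_(x <- s | f x) (if d x then 2 else 1) = count f s + count (predI f d) s.
Proof.
elim: s => [|x s IHs]; first by rewrite big_nil.
by rewrite big_cons IHs /=; case: (f x); case: (d x) => /=; lia.
Qed.

Definition swap_pair (T : Type) (p : T * T) : T * T := (p.2, p.1).

Lemma swap_pairK (T : Type) : involutive (@swap_pair T).
Proof. by case. Qed.

Lemma mem_swap_ordered_pairs n p :
  (swap_pair p \in ordered_pairs n) = (p \in ordered_pairs n).
Proof. by case: p => x y; rewrite !mem_ordered_pairs andbCA addnC. Qed.

Definition is_diagonal (p : seq nat * seq nat) : bool := p.1 == p.2.

Lemma calP_double n : let L := ordered_pairs n in
  (calP n).*2 = size L + 3 * count is_diagonal L.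
Proof.
move=> L; rewrite /calP; set first := first_in_orbit (@swap_pair _) L.
have -> : unordered_pairs n = filter first L by [].
rewrite big_filter (sum_weights first is_diagonal).
have first_diag : count (predI first is_diagonal) L = count is_diagonal L.
  apply: eq_count => -[x y]; rewrite /= /first /first_in_orbit /is_diagonal.
  by have [->|] := eqVneq x y; rewrite ?leqnn ?andbF.
have fixedE : count (fun p => swap_pair p == p) L = count is_diagonal L.
  by apply: eq_count => -[x y]; rewrite /is_diagonal xpair_eqE eq_sym andbb.
have := double_count_first (@swap_pairK _) (ordered_pairs_uniq n)
  (@mem_swap_ordered_pairs n).
rewrite -/L -/first fixedE first_diag -!muln2 mulnDl => ->.
by rewrite -addnA (mulnC _ 2) -mulSn.
Qed.

(* A diagonal pair (xi, xi) is determined by a partition xi of n/2. *)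
Lemma count_diagonal_pairs n :
  count is_diagonal (ordered_pairs n) <= size (partitions n./2).
Proof.
rewrite -size_filter -(size_map fst); apply: uniq_leq_size.
  rewrite map_inj_in_uniq; first exact/filter_uniq/ordered_pairs_uniq.
  move=> [a b] [c d]; rewrite !mem_filter /is_diagonal /=.
  by move=> /andP [/eqP <- _] /andP [/eqP <- _] ->.
move=> x /mapP [[a b]]; rewrite mem_filter /is_diagonal /=.
move=> /andP [/eqP <- ab_in] ->.
move: ab_in; rewrite mem_ordered_pairs mem_partitions => /and3P [-> _ /eqP <-].
by rewrite addnn doubleK eqxx.
Qed.

Definition incr_head (s : seq nat) : seq nat :=
  if s is x :: t then x.+1 :: t else s.

(* comp3 k lists the compositions of k into parts >= 3: either the first
   part exceeds 3 (and is decremented) or it equals 3 (and is dropped). *)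
Fixpoint comp3 (k : nat) : seq (seq nat) :=
  match k with
  | 0 => [:: [::]]
  | 1 | 2 => [::]
  | (k'.+2 as k2).+1 => map incr_head (comp3 k2) ++ map (cons 3) (comp3 k')
  end.

(* ones_comp3 k lists the sequences 1^i ++ c with c in comp3 (k - i). *)
Fixpoint ones_comp3 (k : nat) : seq (seq nat) :=
  if k is k'.+1 then map (cons 1) (ones_comp3 k') ++ comp3 k else comp3 0.

(* codes k lists the sequences 2^j ++ 1^i ++ c with 2j + i + |c| = k. *)
Fixpoint codes (k : nat) : seq (seq nat) :=
  match k with
  | k'.+2 => map (cons 2) (codes k') ++ ones_comp3 k'.+2
  | _ => ones_comp3 k
  end.

Lemma comp3S k :
  comp3 k.+3 = map incr_head (comp3 k.+2) ++ map (cons 3) (comp3 k).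
Proof. by []. Qed.

Lemma ones_comp3S k :
  ones_comp3 k.+1 = map (cons 1) (ones_comp3 k) ++ comp3 k.+1.
Proof. by []. Qed.

Lemma codesS k : codes k.+2 = map (cons 2) (codes k) ++ ones_comp3 k.+2.
Proof. by []. Qed.

Lemma mem_comp3 c : all (fun x => 2 < x) c -> c \in comp3 (sumn c).
Proof.
move: {-1}(sumn c) (erefl (sumn c)) => k; elim/ltn_ind: k c => k IHk [|x c] /=.
  by move=> <-.
move=> sum_xc /andP [x_gt2 c_gt2].
have [x_gt3 | x_eq3] : 3 < x \/ x = 3 by lia.
- have -> : k = (k - 3).+3 by lia.
  rewrite comp3S mem_cat; apply/orP; left.
  have -> : x :: c = incr_head (x.-1 :: c) by case: x x_gt2 {sum_xc x_gt3}.
  apply: map_f; apply: IHk => /=; [lia | lia | rewrite c_gt2 andbT; lia].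
- have -> : k = (sumn c).+3 by lia.
  rewrite comp3S mem_cat; apply/orP; right; rewrite x_eq3.
  by apply: map_f; apply: IHk => //; lia.
Qed.

Lemma mem_ones_comp3 i c :
  all (fun x => 2 < x) c -> nseq i 1 ++ c \in ones_comp3 (i + sumn c).
Proof.
move=> /mem_comp3 c_in; elim: i => [|i IHi].
  by case: (sumn c) c_in => // k c_in; rewrite ones_comp3S mem_cat c_in orbT.
by rewrite addSn ones_comp3S mem_cat [nseq _ _ ++ _]/= map_f.
Qed.

Lemma mem_codes j w k :
  w \in ones_comp3 k -> nseq j 2 ++ w \in codes (j.*2 + k).
Proof.
move=> w_in; elim: j => [|j IHj].
  by case: k w_in => [|[|k]] // w_in; rewrite codesS mem_cat w_in orbT.
by rewrite doubleS !addSn codesS mem_cat [nseq _ _ ++ _]/= map_f.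
Qed.

Definition encode (s : seq nat) : seq nat :=
  nseq (count_mem 2 s) 2 ++ nseq (count_mem 1 s) 1 ++ filter (fun x => 2 < x) s.

Lemma sumn_encode s : all (fun x => 0 < x) s -> sumn s =
  (count_mem 2 s).*2 + (count_mem 1 s + sumn (filter (fun x => 2 < x) s)).
Proof.
elim: s => //= x s IHs /andP [x_gt0 /IHs ->].
by case: x x_gt0 => [|[|[|x]]] //= _; lia.
Qed.

Lemma encode_in_codes s : is_partition s -> encode s \in codes (psize s).
Proof.
move=> /andP [_ s_pos]; rewrite /psize (sumn_encode s_pos).
by apply/mem_codes/mem_ones_comp3; apply: filter_all.
Qed.

Lemma count_encode v s : 0 < v -> count_mem v (encode s) = count_mem v s.
Proof.
move=> v_gt0; rewrite !count_cat !count_nseq count_filter.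
have -> : count (predI (pred1 v) (fun x => 2 < x)) s = (2 < v) * count_mem v s.
  elim: s => [|x s IHs] /=; first by rewrite muln0.
  by rewrite IHs; have [->|] := eqVneq x v; case: (2 < v) => /=; lia.
by case: v v_gt0 => [|[|[|v]]] //= _; lia.
Qed.

Lemma count_mem0_pos s : all (fun x => 0 < x) s -> count_mem 0 s = 0.
Proof. by elim: s => //= -[|x] s IHs /andP [] // _ /IHs ->. Qed.

Lemma encode_inj : {in is_partition &, injective encode}.
Proof.
move=> s1 s2 /andP [s1_sorted s1_pos] /andP [s2_sorted s2_pos] eq_enc.
apply: (sorted_eq (leT := geq)) => //.
- by move=> x y z /= yx zy; apply: leq_trans zy yx.
- by move=> x y /= /andP [xy yx]; apply/anti_leq; rewrite xy yx.
apply/allP => -[|v] _ /=; apply/eqP; first by rewrite !count_mem0_pos.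
by rewrite -(count_encode s1) // eq_enc count_encode.
Qed.

Lemma size_partitions_le k : size (partitions k) <= size (codes k).
Proof.
rewrite -(size_map encode); apply: uniq_leq_size.
  rewrite map_inj_in_uniq ?partitions_uniq // => s1 s2.
  rewrite !mem_partitions => /andP [s1_part _] /andP [s2_part _].
  exact: encode_inj.
move=> w /mapP [s]; rewrite mem_partitions => /andP [s_part /eqP <-] ->.
exact: encode_in_codes.
Qed.

Lemma size_comp3S k :
  size (comp3 k.+3) = size (comp3 k.+2) + size (comp3 k).
Proof. by rewrite comp3S size_cat !size_map. Qed.

Lemma size_ones_comp3S k :
  size (ones_comp3 k.+1) = size (ones_comp3 k) + size (comp3 k.+1).
Proof. by rewrite ones_comp3S size_cat size_map. Qed.

Lemma size_codesS k :
  size (codes k.+2) = size (codes k) + size (ones_comp3 k.+2).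
Proof. by rewrite codesS size_cat size_map. Qed.

Lemma comp3_bound k : 2 ^ k * size (comp3 k) <= 3 ^ k.
Proof.
elim/ltn_ind: k => -[|[|[|k]]] IHk //.
have := IHk k.+2 (leqnn _); have := IHk k ltac:(lia).
by rewrite size_comp3S !expnS; lia.
Qed.

Lemma ones_comp3_bound k : 2 ^ k * size (ones_comp3 k) <= 3 ^ k.+1.
Proof.
elim: k => [|k IHk] //; have := comp3_bound k.+1.
by rewrite size_ones_comp3S !expnS in IHk *; lia.
Qed.

Lemma codes_bound k : 5 * 2 ^ k * size (codes k) <= 3 ^ k.+3.
Proof.
elim/ltn_ind: k => -[|[|k]] IHk //.
have := IHk k ltac:(lia); have := ones_comp3_bound k.+2.
by rewrite size_codesS !expnS; lia.
Qed.

Definition pair_bound (n : nat) : nat :=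
  sumn [seq size (codes k) * size (codes (n - k)) | k <- iota 0 n.+1]
  + 3 * size (codes n./2).

Lemma calP_le_pair_bound n : (calP n).*2 <= pair_bound n.
Proof.
rewrite calP_double size_ordered_pairs; apply: leq_add.
  rewrite !sumnE !big_map; apply: leq_sum => k _.
  by apply: leq_mul; apply: size_partitions_le.
by rewrite leq_mul2l (leq_trans (count_diagonal_pairs n)) ?size_partitions_le.
Qed.

Lemma sumn_map_le_const (T : eqType) (f : T -> nat) (m c : nat) (s : seq T) :
  (forall x, x \in s -> m * f x <= c) -> m * sumn (map f s) <= size s * c.
Proof.
elim: s => [|x s IHs] f_le /=; first by rewrite muln0.
rewrite mulnDr mulSn leq_add ?f_le ?mem_head // IHs // => y y_in.
by rewrite f_le // in_cons y_in orbT.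
Qed.

Lemma pair_term_bound n k : k <= n ->
  25 * 2 ^ n * (size (codes k) * size (codes (n - k))) <= 3 ^ (n + 6).
Proof.
move=> le_kn; have := leq_mul (codes_bound k) (codes_bound (n - k)).
have -> : 3 ^ (n + 6) = 3 ^ k.+3 * 3 ^ (n - k).+3.
  by rewrite -expnD; congr (_ ^ _); lia.
have -> : 2 ^ n = 2 ^ k * 2 ^ (n - k) by rewrite -expnD subnKC.
lia.
Qed.

Lemma leq_exp_base m1 m2 e : m1 <= m2 -> m1 ^ e <= m2 ^ e.
Proof. by move=> le_m12; elim: e => // e IHe; rewrite !expnS leq_mul. Qed.

Lemma diagonal_term_bound n :
  25 * 2 ^ n * (3 * size (codes n./2)) <= 3 ^ (n + 6).
Proof.
set m := n./2; have le_mn : m <= n by rewrite /m; lia.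
have := leq_mul (codes_bound m) (leq_exp_base (n - m) (isT : 2 <= 3)).
have -> : 3 ^ (n + 6) = 27 * (3 ^ m.+3 * 3 ^ (n - m)).
  by rewrite -expnD -[27]/(3 ^ 3) -expnD; congr (_ ^ _); lia.
have -> : 2 ^ n = 2 ^ m * 2 ^ (n - m) by rewrite -expnD subnKC.
lia.
Qed.

(* The bound is O(n (3/2)^n), with n + 1 product terms and one diagonal term. *)
Lemma pair_bound_growth n : 25 * 2 ^ n * pair_bound n <= (n + 2) * 3 ^ (n + 6).
Proof.
have -> : n + 2 = size (iota 0 n.+1) + 1 by rewrite size_iota; lia.
rewrite /pair_bound mulnDr mulnDl mul1n leq_add ?diagonal_term_bound //.
apply: sumn_map_le_const => k; rewrite mem_iota => /andP [_ lt_kn].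
exact: pair_term_bound.
Qed.

Lemma calD_step n : 4 <= n -> calD n.+2 = 3 * calD n.
Proof.
move=> n_ge4; have odd_n2 : odd n.+2 = odd n by rewrite /= negbK.
rewrite /calD odd_n2; case: ifP => n_odd.
  have -> : (n.+2 - 5) %/ 2 = ((n - 5) %/ 2).+1 by lia.
  by rewrite (expnS 3) mulnCA.
have -> : (n.+2 - 4) %/ 2 = ((n - 4) %/ 2).+1 by lia.
by rewrite (expnS 3) mulnCA.
Qed.

(* Once (n + 2) 3^(n+6) < 50 2^n D(n), this persists from n to n + 2: the
   left side grows by 9 (n + 4) / (n + 2) <= 12 and the right side by 12. *)
Lemma growth_step n : 4 <= n ->
  (n + 2) * 3 ^ (n + 6) < 50 * 2 ^ n * calD n ->
  (n.+2 + 2) * 3 ^ (n.+2 + 6) < 50 * 2 ^ n.+2 * calD n.+2.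
Proof.
move=> n_ge4 grows_n; rewrite calD_step //.
have -> : n.+2 + 6 = (n + 6).+2 by rewrite !addSn.
have : 9 * (n + 4) * 3 ^ (n + 6) <= 12 * (n + 2) * 3 ^ (n + 6).
  by rewrite leq_mul2r; apply/orP; right; lia.
by rewrite !expnS; lia.
Qed.

(* Transfer of arithmetic between unary and binary natural numbers, so that
   the finitely many remaining cases can be checked by computation. *)
Lemma N_of_expn m e : N.of_nat (m ^ e) = (N.of_nat m ^ N.of_nat e)%N.
Proof.
elim: e => [|e IHe] //.
by rewrite expnS Nat2N.inj_mul IHe Nat2N.inj_succ N.pow_succ_r'.
Qed.

Lemma ltn_of_bin m n : (N.of_nat m <? N.of_nat n)%N -> m < n.
Proof.
move/N.ltb_lt; rewrite /N.lt -Nat2N.inj_compare.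
by move/PeanoNat.Nat.compare_lt_iff/ltP.
Qed.

(* The sizes of comp3 k, comp3 k.+1, comp3 k.+2, ones_comp3 k,
   ones_comp3 k.+1, codes k and codes k.+1, computed in binary by the
   recurrences of the lists. *)
Fixpoint code_counts (k : nat) : N * N * N * N * N * N * N :=
  if k is k'.+1 then
    let '(c0, c1, c2, o0, o1, a0, a1) := code_counts k' in
    (c1, c2, c2 + c0, o1, o1 + c2, a1, a0 + (o1 + c2))%N
  else (1, 0, 0, 1, 1, 1, 1)%N.

Lemma code_countsE k : code_counts k =
  (N.of_nat (size (comp3 k)), N.of_nat (size (comp3 k.+1)),
   N.of_nat (size (comp3 k.+2)), N.of_nat (size (ones_comp3 k)),
   N.of_nat (size (ones_comp3 k.+1)), N.of_nat (size (codes k)),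
   N.of_nat (size (codes k.+1))).
Proof.
elim: k => [|k IHk] //=; rewrite IHk size_comp3S size_codesS.
by rewrite (size_ones_comp3S k.+1) !Nat2N.inj_add.
Qed.

Definition ncodes_bin (k : nat) : N := (code_counts k).1.2.

Lemma ncodes_binE k : N.of_nat (size (codes k)) = ncodes_bin k.
Proof. by rewrite /ncodes_bin code_countsE. Qed.

Definition pair_bound_bin (n : nat) : N :=
  (foldr N.add 0 [seq ncodes_bin k * ncodes_bin (n - k) | k <- iota 0 n.+1]
   + 3 * ncodes_bin n./2)%N.

Definition calD_bin (n : nat) : N :=
  if odd n then (32 * 3 ^ N.of_nat ((n - 5) %/ 2))%N
  else (16 * 3 ^ N.of_nat ((n - 4) %/ 2))%N.

Lemma pair_bound_binE n : N.of_nat (pair_bound n) = pair_bound_bin n.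
Proof.
rewrite /pair_bound /pair_bound_bin Nat2N.inj_add Nat2N.inj_mul ncodes_binE.
congr (_ + _)%N; elim: (iota 0 n.+1) => [|k s IHs] //=.
by rewrite Nat2N.inj_add IHs Nat2N.inj_mul !ncodes_binE.
Qed.

Lemma calD_binE n : N.of_nat (calD n) = calD_bin n.
Proof.
by rewrite /calD /calD_bin; case: odd; rewrite Nat2N.inj_mul !N_of_expn.
Qed.

Lemma pair_bound_small n : 4 <= n <= 40 -> pair_bound n < 2 * calD n.
Proof.
have small_cases :
  all (fun n => pair_bound_bin n <? 2 * calD_bin n)%N (iota 4 37) by vm_compute.
move=> n_range; apply: ltn_of_bin.
rewrite pair_bound_binE Nat2N.inj_mul calD_binE.
by have /allP := small_cases; apply; rewrite mem_iota; lia.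
Qed.

Lemma growth_base n : n \in [:: 41; 42] ->
  (n + 2) * 3 ^ (n + 6) < 50 * 2 ^ n * calD n.
Proof.
have base_cases : all (fun n => (N.of_nat n + 2) * 3 ^ (N.of_nat n + 6) <?
   50 * 2 ^ N.of_nat n * calD_bin n)%N [:: 41; 42] by vm_compute.
move=> n_base; apply: ltn_of_bin.
rewrite !Nat2N.inj_mul !N_of_expn Nat2N.inj_add calD_binE !Nat2N.inj_add.
by have /allP := base_cases; apply.
Qed.

Lemma growth_from n : 41 <= n -> (n + 2) * 3 ^ (n + 6) < 50 * 2 ^ n * calD n.
Proof.
elim/ltn_ind: n => n IHn n_ge41.
have [n_base | n_ge43] : n \in [:: 41; 42] \/ 43 <= n by rewrite !inE; lia.
  exact: growth_base.
have -> : n = (n - 2).+2 by lia.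
by apply: growth_step; [lia | apply: IHn; lia].
Qed.

Lemma pair_bound_large n : 41 <= n -> pair_bound n < 2 * calD n.
Proof.
move=> n_ge41; rewrite -(ltn_pmul2l (_ : 0 < 25 * 2 ^ n)) ?muln_gt0 ?expn_gt0 //.
apply: leq_ltn_trans (pair_bound_growth n) _.
by have := growth_from n_ge41; lia.
Qed.

Theorem mainTheorem12 (n : nat) (hn : 4 <= n) : calP n < calD n.
Proof.
have bound_lt : pair_bound n < 2 * calD n.
  have [n_small | n_large] := ltnP n 41; last exact: pair_bound_large.
  by apply: pair_bound_small; rewrite hn.
rewrite -(ltn_pmul2l (isT : 0 < 2)) mul2n.
exact: leq_ltn_trans (calP_le_pair_bound n) bound_lt.
Qed.
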